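(* Let $\boldsymbol X \in \mathbb{R}^{n\times d}$, $\boldsymbol y \in \mathbb{R}^n$, $\boldsymbol M = \boldsymbol X^\top \boldsymbol X$, $\boldsymbol r = \boldsymbol X^\top \boldsymbol y$. Assume (A1) $\boldsymbol r > \mathbf 0$ and (A2) $M_{ij}\le 0$ for all $i\neq j$. Let $\boldsymbol C>\mathbf 0$, $\boldsymbol k>\mathbf 0$ in $\mathbb{R}^d$, and for $\varepsilon>0$ let $\boldsymbol\theta^{(\varepsilon)}(t)$ solve $$\frac{\mathrm d \theta_i}{\mathrm d t} = \theta_i\Big(r_i - \sum_{j=1}^d M_{ij}\theta_j\Big),\quad i=1,\dots,d,$$ with $\boldsymbol\theta^{(\varepsilon)}(0) = (C_1\varepsilon^{k_1},\dots,C_d\varepsilon^{k_d})$. Then there exists $B>0$ such that $\Vert\boldsymbol\theta^{(\varepsilon)}(t)\Vert\le B$ for all $\varepsilon\in(0,1]$ and all $t\ge 0$.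
   Context: Vector inequalities are coordinatewise; $\Vert\cdot\Vert$ is the Euclidean norm. *)

From HB Require Import structures.
From mathcomp Require Import all_boot all_order all_algebra.
From mathcomp Require Import all_classical all_reals all_analysis.
Set Implicit Arguments. Unset Strict Implicit. Unset Printing Implicit Defensive.
Import Order.TTheory GRing.Theory Num.Theory.
Import numFieldNormedType.Exports.
Local Open Scope classical_set_scope.
Local Open Scope ring_scope.

Definition eucl_norm (R : realType) (d : nat) (v : 'I_d -> R) : R :=
  Num.sqrt (\sum_(i < d) v i ^+ 2).

Definition lv_field (R : realType) (d : nat) (M : 'M[R]_d) (r : 'cV[R]_d)
  (th : 'I_d -> R) (i : 'I_d) : R :=
  th i * (r i 0 - \sum_(j < d) M i j * th j).

Definition lv_solution (R : realType) (d : nat) (M : 'M[R]_d) (r : 'cV[R]_d)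
  (x : R -> 'I_d -> R) (x0 : 'I_d -> R) : Prop :=
  forall i : 'I_d,
    x 0 i = x0 i /\
    ((fun s => x s i) @ 0^'+ --> x0 i) /\
    (forall t : R, 0 < t -> is_derive t (1 : R) (fun s => x s i) (lv_field M r (x t) i)).

From HB Require Import structures.
From mathcomp Require Import all_boot all_order all_algebra.
From mathcomp Require Import all_classical all_reals all_analysis.
From mathcomp Require Import ring lra.
Import Order.TTheory GRing.Theory Num.Theory.
Import numFieldNormedType.Exports.
Local Open Scope classical_set_scope.
Local Open Scope ring_scope.

(* Along a solution of the Lotka-Volterra system with M = X^T X and r = X^T y, the
   per-capita growth rate is g = r - M theta = - X^T (X theta - y), so the least-squares
   energy ||X theta - y||^2 has derivative -2 sum_i theta_i g_i^2: it does not increase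
   while theta >= 0.  Positivity is preserved by any Lotka-Volterra flow: theta_i' =
   theta_i g_i with g_i bounded below on compact time intervals, so theta_i e^(K t) is
   nondecreasing there (a Groenwall argument), and a real induction propagates this
   along [0, +oo).  A bounded energy bounds the residual X theta - y, hence
   r . theta = y^T X theta, which controls every theta_i >= 0 because r > 0.  The
   initial data C_i eps^k_i lie in (0, C_i], so the bound is uniform in eps; the sign
   condition (A2) on the off-diagonal entries of M is not needed. *)

Lemma trmx_mulmxE (R : pzRingType) (m p q : nat) (A : 'M[R]_(m, p))
  (B : 'M[R]_(m, q)) (i : 'I_p) (j : 'I_q) : (A^T *m B) i j = \sum_(k < m) A k i * B k j.
Proof. by rewrite mxE; apply: eq_bigr => k _; rewrite mxE. Qed.

Lemma sum_le_of_weighted_sum_le (R : realFieldType) (m : nat) (c v : 'I_m -> R)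
  (Q : R) :
  (forall i, 0 < c i) -> (forall i, 0 <= v i) -> \sum_(i < m) c i * v i <= Q ->
  \sum_(i < m) v i <= \sum_(i < m) Q / c i.
Proof.
move=> c_gt0 v_ge0 dot_le; apply: ler_sum => i _; rewrite ler_pdivlMr // mulrC.
apply: le_trans dot_le; rewrite (bigD1 i) //= lerDl.
by apply: sumr_ge0 => j _; apply: mulr_ge0; [exact: ltW | exact: v_ge0].
Qed.

Section RealAnalysis.
Context {R : realType}.

Lemma real_ind_ge0 (P : R -> Prop) :
  (forall t, 0 <= t -> P t -> \forall s \near t^'+, P s) ->
  (forall t, 0 <= t -> (forall s, 0 <= s < t -> P s) -> P t) ->
  forall t, 0 <= t -> P t.
Proof.
move=> P_right P_left t t0; apply: contrapT => nPt.
pose S := [set s | 0 <= s /\ ~ P s].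
have S_ne : S !=set0 by exists t.
have inf_le s : S s -> inf S <= s.
  by move=> Ss; apply: ge_inf Ss; exists 0 => u [].
have inf_ge0 : 0 <= inf S by apply: lb_le_inf => // u [].
have P_inf : P (inf S).
  apply: P_left => // s /andP[s0 s_lt]; apply: contrapT => nPs.
  by have := inf_le s (conj s0 nPs); rewrite leNgt s_lt.
have /nbhs_normP[e /= e0 P_near] := P_right _ inf_ge0 P_inf.
have [s [s0 nPs] s_lt] : exists2 s, S s & s < inf S + e.
  by apply: inf_lt => //; rewrite ltrDl.
have := inf_le s (conj s0 nPs); rewrite le_eqVlt => /predU1P[s_inf|inf_lt_s].
  by apply: nPs; rewrite -s_inf.
apply: nPs; apply: P_near => //=.
by rewrite ltr0_norm ?subr_lt0 // opprB ltrBlDl.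
Qed.

Lemma is_derive_expRM (K x : R) :
  is_derive x 1 (fun s => expR (K * s)) (K * expR (K * x)).
Proof.
have dK : is_derive x 1 (fun s => K * s) K.
  exact: is_derive_eq (is_deriveZ K (is_derive_id x 1)) (mulr1 K).
by rewrite mulrC; exact: is_derive1_comp (is_derive_expR _) dK.
Qed.

Lemma gronwall_lower (f df : R -> R) (K a b : R) : a <= b ->
  (forall x, a <= x <= b -> is_derive x 1 f (df x)) ->
  (forall x, a < x < b -> - K * f x <= df x) ->
  f a * expR (K * a) <= f b * expR (K * b).
Proof.
move=> ab f_df df_ge.
pose psi x := f x * expR (K * x).
have psi_der x : a <= x <= b ->
    is_derive x 1 psi (expR (K * x) * (df x + K * f x)).
  move=> /f_df fx; apply: is_derive_eq (is_deriveM fx (is_derive_expRM K x)) _.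
  by rewrite /GRing.scale /=; ring.
have psi_derivable x : a <= x <= b -> derivable psi x 1.
  by move=> /psi_der psi_x; exact: ex_derive.
apply: (@ger0_derive1_le_cc _ psi a b); rewrite ?in_itv /= ?lexx ?ab //.
- by move=> x; rewrite in_itv /= => /andP[ax xb]; apply: psi_derivable; rewrite !ltW.
- move=> x; rewrite in_itv /= => x_ab.
  have /andP[ax xb] := x_ab.
  have psi_x : is_derive x 1 psi (expR (K * x) * (df x + K * f x)).
    by apply: psi_der; rewrite !ltW.
  rewrite derive1E derive_val.
  by apply: mulr_ge0; [exact: expR_ge0 | have := df_ge x x_ab; lra].
- by apply: derivable_within_continuous => x; rewrite in_itv /=; exact: psi_derivable.
Qed.

Lemma abs_le_eucl_norm {m : nat} (v : 'I_m -> R) (i : 'I_m) :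
  `|v i| <= eucl_norm v.
Proof.
rewrite /eucl_norm -sqrtr_sqr ler_sqrt ?sumr_ge0 // => [|j _]; last exact: sqr_ge0.
by rewrite (bigD1 i) //= lerDl sumr_ge0 // => j _; exact: sqr_ge0.
Qed.

Lemma eucl_norm_le_sum {m : nat} (v : 'I_m -> R) :
  (forall i, 0 <= v i) -> eucl_norm v <= \sum_(i < m) v i.
Proof.
move=> v_ge0; have sum_ge0 : 0 <= \sum_(i < m) v i by exact: sumr_ge0.
rewrite /eucl_norm -(ger0_norm sum_ge0) -sqrtr_sqr ler_sqrt; last exact: sqr_ge0.
rewrite expr2 mulr_suml; apply: ler_sum => i _; rewrite expr2 ler_wpM2l //.
by rewrite (bigD1 i) //= lerDl sumr_ge0.
Qed.

End RealAnalysis.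

Definition lv_rate {R : realType} {d : nat} (M : 'M[R]_d) (r : 'cV[R]_d)
  (th : 'I_d -> R) (i : 'I_d) : R :=
  r i 0 - \sum_(j < d) M i j * th j.

Section LotkaVolterra.
Context {R : realType} {d : nat} {M : 'M[R]_d} {r : 'cV[R]_d}.
Context {th : R -> 'I_d -> R} {x0 : 'I_d -> R}.
Hypothesis th_sol : lv_solution M r th x0.

Lemma lv_solution_init : th 0 = x0.
Proof. by apply/funext => i; have [] := th_sol i. Qed.

Lemma lv_solution_is_derive (i : 'I_d) {t : R} : 0 < t ->
  is_derive t 1 (fun s => th s i) (th t i * lv_rate M r (th t) i).
Proof. by have [_ [_ th_der]] := th_sol i; exact: th_der. Qed.

Lemma lv_solution_cvg_right (i : 'I_d) {t : R} : 0 <= t ->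
  th s i @[s --> t^'+] --> th t i.
Proof.
rewrite le_eqVlt => /predU1P[<-|t0].
  by rewrite lv_solution_init; have [_ []] := th_sol i.
apply: cvg_at_right_filter; apply: differentiable_continuous.
have th_der := lv_solution_is_derive i t0.
by rewrite -derivable1_diffP; exact: ex_derive.
Qed.

Lemma derivable_lv_rate (i : 'I_d) {t : R} : 0 < t ->
  derivable (fun s => lv_rate M r (th s) i) t 1.
Proof.
move=> t0.
have -> : (fun s => lv_rate M r (th s) i) =
          cst (r i 0) - \sum_(j < d) (M i j \*: (fun s => th s j)).
  by apply/funext => s; rewrite /lv_rate /= fct_sumE.
apply: derivableB; first exact: derivable_cst.
apply: derivable_sum => j; apply: derivableZ.
have th_der := lv_solution_is_derive j t0; exact: ex_derive.
Qed.

Lemma lv_solution_gt0_at (t : R) : 0 < t ->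
  (forall s, 0 < s < t -> forall i, 0 < th s i) -> forall i, 0 < th t i.
Proof.
move=> t0 th_gt0 i.
have half_gt0 : 0 < t / 2 by rewrite divr_gt0.
have half_lt : t / 2 < t by rewrite ltr_pdivrMr // mulr_natr mulr2n ltrDr.
have [c _ rate_min] : exists2 c, c \in `[t / 2, t] &
    forall s, s \in `[t / 2, t] -> lv_rate M r (th c) i <= lv_rate M r (th s) i.
  apply: EVT_min; first exact: ltW.
  apply: derivable_within_continuous => s; rewrite in_itv /= => /andP[half_le_s _].
  exact/(derivable_lv_rate i)/(lt_le_trans half_gt0 half_le_s).
set K := - lv_rate M r (th c) i.
have growth : th (t / 2) i * expR (K * (t / 2)) <= th t i * expR (K * t).
  apply: (@gronwall_lower _ (fun s => th s i) (fun s => th s i * lv_rate M r (th s) i)).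
  - exact: ltW.
  - move=> s /andP[half_le_s _] /=.
    exact/(lv_solution_is_derive i)/(lt_le_trans half_gt0 half_le_s).
  - move=> s /andP[half_lt_s s_lt]; rewrite opprK mulrC ler_wpM2l //.
      by apply: ltW; apply: th_gt0; rewrite s_lt (lt_trans half_gt0 half_lt_s).
    by apply: rate_min; rewrite in_itv /= !ltW.
have : 0 < th (t / 2) i * expR (K * (t / 2)).
  by rewrite mulr_gt0 ?expR_gt0 // th_gt0 // half_gt0 half_lt.
by move/lt_le_trans/(_ growth); rewrite pmulr_lgt0 // expR_gt0.
Qed.

Lemma lv_solution_gt0 (x0_gt0 : forall i, 0 < x0 i) {t : R} : 0 <= t ->
  forall i, 0 < th t i.
Proof.
move: t; apply: real_ind_ge0 => t t0.
  move=> th_t_gt0; apply: filter_forall => i.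
  exact: cvgr_gt (lv_solution_cvg_right i t0) _ (th_t_gt0 i).
move: t0; rewrite le_eqVlt => /predU1P[<- _|t0 th_gt0]; first by rewrite lv_solution_init.
by apply: lv_solution_gt0_at => // s /andP[s0 st]; apply: th_gt0; rewrite st ltW.
Qed.

End LotkaVolterra.

Definition residual {R : realType} {n d : nat} (X : 'M[R]_(n, d)) (y : 'cV[R]_n)
  (v : 'I_d -> R) (k : 'I_n) : R :=
  \sum_(i < d) X k i * v i - y k 0.

Definition lsq_energy {R : realType} {n d : nat} (X : 'M[R]_(n, d)) (y : 'cV[R]_n)
  (v : 'I_d -> R) : R :=
  \sum_(k < n) residual X y v k ^+ 2.

Definition lsq_energy_bound {R : realType} {n d : nat} (X : 'M[R]_(n, d))
  (y : 'cV[R]_n) (C : 'I_d -> R) : R :=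
  \sum_(k < n) (\sum_(i < d) `|X k i| * C i + `|y k 0|) ^+ 2.

Definition lv_lsq_bound {R : realType} {n d : nat} (X : 'M[R]_(n, d))
  (y : 'cV[R]_n) (C : 'I_d -> R) : R :=
  \sum_(i < d) (\sum_(k < n) `|y k 0| * (Num.sqrt (lsq_energy_bound X y C) + `|y k 0|))
               / (X^T *m y) i 0.

Section LeastSquares.
Context {R : realType} {n d : nat} (X : 'M[R]_(n, d)) (y : 'cV[R]_n).

Lemma lv_rate_lsq (v : 'I_d -> R) (i : 'I_d) :
  lv_rate (X^T *m X) (X^T *m y) v i = - \sum_(k < n) X k i * residual X y v k.
Proof.
rewrite /lv_rate /residual trmx_mulmxE.
under [in RHS]eq_bigr do rewrite mulrBr.
rewrite sumrB opprB; congr (_ - _).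
under eq_bigr do rewrite trmx_mulmxE mulr_suml.
rewrite exchange_big /=; apply: eq_bigr => k _.
by rewrite mulr_sumr; apply: eq_bigr => j _; rewrite mulrA.
Qed.

Lemma lsq_rhs_dot (v : 'I_d -> R) :
  \sum_(i < d) (X^T *m y) i 0 * v i = \sum_(k < n) y k 0 * (residual X y v k + y k 0).
Proof.
under eq_bigr do rewrite trmx_mulmxE mulr_suml.
rewrite exchange_big /=; apply: eq_bigr => k _.
by rewrite /residual subrK mulr_sumr; apply: eq_bigr => i _; rewrite mulrCA mulrA.
Qed.

Lemma lsq_rhs_dot_le (v : 'I_d -> R) (E : R) : lsq_energy X y v <= E ->
  \sum_(i < d) (X^T *m y) i 0 * v i <= \sum_(k < n) `|y k 0| * (Num.sqrt E + `|y k 0|).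
Proof.
move=> energy_le; rewrite lsq_rhs_dot; apply: ler_sum => k _.
have res_le : `|residual X y v k| <= Num.sqrt E.
  by apply: le_trans (abs_le_eucl_norm (residual X y v) k) _; exact: ler_wsqrtr.
apply: le_trans (ler_norm _) _; rewrite normrM ler_wpM2l //.
by apply: le_trans (ler_normD _ _) _; rewrite lerD2r.
Qed.

Lemma lsq_energy_le_bound (v C : 'I_d -> R) : (forall i, 0 <= v i <= C i) ->
  lsq_energy X y v <= lsq_energy_bound X y C.
Proof.
move=> v_bd; apply: ler_sum => k _.
have res_le : `|residual X y v k| <= \sum_(i < d) `|X k i| * C i + `|y k 0|.
  apply: le_trans (ler_normB _ _) _; rewrite lerD2r.
  apply: le_trans (ler_norm_sum _ _ _) _; apply: ler_sum => i _.
  by have /andP[v0 vC] := v_bd i; rewrite normrM ler_wpM2l // ger0_norm.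
rewrite -real_normK ?num_real // ler_sqr ?nnegrE //.
exact: le_trans res_le.
Qed.

Lemma lsq_energy_cvg (T : Type) (F : set_system T) (FF : Filter F)
  (v : T -> 'I_d -> R) (v0 : 'I_d -> R) :
  (forall i, v s i @[s --> F] --> v0 i) ->
  lsq_energy X y (v s) @[s --> F] --> lsq_energy X y v0.
Proof.
move=> v_cvg; apply: cvg_big => [|k _]; first exact: add_continuous.
have res_cvg : residual X y (v s) k @[s --> F] --> residual X y v0 k.
  apply: cvgB; last exact: cvg_cst.
  apply: cvg_big => [|i _]; first exact: add_continuous.
  by apply: cvgM; [exact: cvg_cst | exact: v_cvg].
by under eq_cvg do rewrite expr2; rewrite expr2; exact: cvgM.
Qed.

End LeastSquares.

Section LeastSquaresFlow.
Context {R : realType} {n d : nat} (X : 'M[R]_(n, d)) (y : 'cV[R]_n).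
Context {th : R -> 'I_d -> R} {x0 : 'I_d -> R}.
Hypothesis th_sol : lv_solution (X^T *m X) (X^T *m y) th x0.
Hypothesis x0_gt0 : forall i, 0 < x0 i.

Lemma is_derive_lsq_energy {t : R} : 0 < t ->
  is_derive t 1 (fun s => lsq_energy X y (th s))
    (- 2 * \sum_(i < d) th t i * lv_rate (X^T *m X) (X^T *m y) (th t) i ^+ 2).
Proof.
move=> t0; set g := lv_rate (X^T *m X) (X^T *m y) (th t).
have res_der k : is_derive t 1 (fun s => residual X y (th s) k)
                   (\sum_(i < d) X k i * (th t i * g i)).
  have -> : (fun s => residual X y (th s) k) =
            \sum_(i < d) (X k i \*: (fun s => th s i)) - cst (y k 0).
    by apply/funext => s; rewrite /residual /= fct_sumE.
  have th_der i := is_deriveZ (X k i) (lv_solution_is_derive th_sol i t0).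
  apply: is_derive_eq (is_deriveB (is_derive_sum th_der) (is_derive_cst _ _ _)) _.
  by rewrite subr0.
have -> : (fun s => lsq_energy X y (th s)) =
          \sum_(k < n) (fun s => residual X y (th s) k) ^+ 2.
  by apply/funext => s; rewrite /lsq_energy fct_sumE.
apply: is_derive_eq (is_derive_sum (fun k => is_deriveX 2 (res_der k))) _.
have rate_eq i : \sum_(k < n) X k i * residual X y (th t) k = - g i.
  by rewrite /g lv_rate_lsq opprK.
transitivity (\sum_(i < d)
  2 * (th t i * g i) * \sum_(k < n) X k i * residual X y (th t) k).
  under eq_bigr do rewrite scaler_sumr.
  rewrite exchange_big /=; apply: eq_bigr => i _; rewrite mulr_sumr.
  by apply: eq_bigr => k _; rewrite expr1 /GRing.scale /=; ring.
by rewrite mulr_sumr; apply: eq_bigr => i _; rewrite rate_eq expr2; ring.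
Qed.

Lemma lsq_energy_le_init {t : R} : 0 <= t ->
  lsq_energy X y (th t) <= lsq_energy X y x0.
Proof.
rewrite le_eqVlt => /predU1P[<-|t0]; first by rewrite (lv_solution_init th_sol).
have energy_der s : 0 < s -> derivable (fun s => lsq_energy X y (th s)) s 1.
  by move=> /is_derive_lsq_energy energy_s; exact: ex_derive.
have energy_right : lsq_energy X y (th s) @[s --> 0^'+] --> lsq_energy X y (th 0).
  by apply: lsq_energy_cvg => i; exact/(lv_solution_cvg_right th_sol i)/lexx.
rewrite -(lv_solution_init th_sol).
apply: (@ler0_derive1_le_cc _ (fun s => lsq_energy X y (th s)) 0 t);
  rewrite ?in_itv /= ?lexx ?(ltW t0) //.
- by move=> s; rewrite in_itv /= => /andP[s0 _]; exact: energy_der.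
- move=> s; rewrite in_itv /= => /andP[s0 _].
  have energy_s := is_derive_lsq_energy s0.
  rewrite derive1E derive_val mulNr oppr_le0 mulr_ge0 // sumr_ge0 // => i _.
  by rewrite mulr_ge0 ?sqr_ge0 // ltW // (lv_solution_gt0 th_sol x0_gt0) ?ltW.
- apply: derivable_oo_LRcontinuous_within.
  apply: derivable_oy_continuousWoo t0 (lexx 0) _; split => // s.
  by rewrite in_itv /= andbT; exact: energy_der.
Qed.

Hypothesis r_gt0 : forall i, 0 < (X^T *m y) i 0.

Lemma lv_lsq_bounded (C : 'I_d -> R) (t : R) : (forall i, x0 i <= C i) ->
  0 <= t -> eucl_norm (th t) <= lv_lsq_bound X y C.
Proof.
move=> x0_le t0; have th_gt0 := lv_solution_gt0 th_sol x0_gt0 t0.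
have th_ge0 i : 0 <= th t i by exact: ltW.
apply: le_trans (eucl_norm_le_sum (th t) th_ge0) _.
apply: sum_le_of_weighted_sum_le => //; apply: lsq_rhs_dot_le.
apply: le_trans (lsq_energy_le_init t0) _.
by apply: lsq_energy_le_bound => i; rewrite x0_le andbT ltW ?x0_gt0.
Qed.

End LeastSquaresFlow.

Theorem lemma2 (R : realType) (n d : nat) (X : 'M[R]_(n, d)) (y : 'cV[R]_n)
  (C k : 'I_d -> R) (theta : R -> R -> 'I_d -> R) :
  (forall i : 'I_d, 0 < (X^T *m y) i 0) ->
  (forall i j : 'I_d, i != j -> (X^T *m X) i j <= 0) ->
  (forall i : 'I_d, 0 < C i) ->
  (forall i : 'I_d, 0 < k i) ->
  (forall eps : R, 0 < eps <= 1 ->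
     lv_solution (X^T *m X) (X^T *m y) (theta eps) (fun i => C i * eps `^ k i)) ->
  exists B : R, 0 < B /\
    forall eps t : R, 0 < eps <= 1 -> 0 <= t -> eucl_norm (theta eps t) <= B.
Proof.
move=> r_gt0 _ C_gt0 k_gt0 theta_sol.
have bound_ge0 : 0 <= lv_lsq_bound X y C.
  apply: sumr_ge0 => i _; apply: divr_ge0; last exact: ltW.
  by apply: sumr_ge0 => j _; rewrite mulr_ge0 ?addr_ge0 ?sqrtr_ge0.
exists (1 + lv_lsq_bound X y C); split; first by rewrite ltr_pwDl.
move=> eps t /andP[eps_gt0 eps_le1] t0; apply: ler_wpDl => //.
apply: (lv_lsq_bounded X y (theta_sol eps _) _ r_gt0 C t _ t0) => [|i|i].
- by rewrite eps_gt0.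
- by rewrite mulr_gt0 ?powR_gt0.
- rewrite ler_piMr ?(ltW (C_gt0 i)) // -[leRHS](powRr0 eps).
  by apply: ger_powR; rewrite ?eps_gt0 ?eps_le1 ?ltW.
Qed.
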